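(* Let $a,b>0$ with $ab\geqslant \frac14 e^2$ and set $c:=\frac{e}{e-1}$. Then $$x\geqslant \left(2^{\log 16}(ab)^{\log(16ab)}\right)^{c^2a}\ \Longrightarrow\ \log x\geqslant a\left(\log(b\log x)\right)^2.$$ *)

From Stdlib Require Import Reals.
Open Scope R_scope.

(* Writing m := ln (4ab), one has 2^(ln 16) (ab)^(ln (16ab)) = exp (m^2), so the hypothesis
   says ln x >= a (c m)^2, i.e. ln x = a s^2 for some s >= c m, and then
   ln (b ln x) = ln (ab s^2) = m + 2 ln (s/2). It remains to see 0 <= m + 2 ln (s/2) <= s.
   The lower bound holds because m >= 2 (this is ab >= e^2/4) and s >= 2.  For the upper
   bound, ln (s/2) grows with slope at most 1/2 beyond s = c m >= 2, so it suffices to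
   check s = c m, where the choice c = e (c - 1) makes c m / 2 = e z with z = (c - 1) m / 2,
   and ln (e z) <= z. *)
From Stdlib Require Import Reals Lra Psatz.
Open Scope R_scope.

Lemma ln_le x y : 0 < x -> x <= y -> ln x <= ln y.
Proof.
  intros hx [hxy | ->]; [left; exact (ln_increasing x y hx hxy) | lra].
Qed.

Lemma ln_le_sub_1 z : 0 < z -> ln z <= z - 1.
Proof.
  intro hz. pose proof (exp_ineq1_le (ln z)) as h. rewrite exp_ln in h by exact hz. lra.
Qed.

Lemma ln_sub_ln_le y s : 0 < y -> 0 < s -> ln s - ln y <= (s - y) / y.
Proof.
  intros hy hs.
  assert (hq : 0 < s / y) by (apply Rdiv_lt_0_compat; assumption).
  pose proof (ln_le_sub_1 _ hq) as h.
  unfold Rdiv in h. rewrite ln_mult, ln_Rinv in h by (try apply Rinv_0_lt_compat; assumption).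
  replace ((s - y) / y) with (s * / y - 1) by (field; lra). lra.
Qed.

Lemma ln_exp1_mul_le z : 0 < z -> ln (exp 1 * z) <= z.
Proof.
  intro hz. rewrite ln_mult, ln_exp by (try apply exp_pos; assumption).
  pose proof (ln_le_sub_1 z hz). lra.
Qed.

Lemma exp1_gt_2 : 2 < exp 1.
Proof. pose proof (exp_ineq1 1 ltac:(lra)). lra. Qed.

Lemma Rpower_exp x y : Rpower (exp x) y = exp (y * x).
Proof. unfold Rpower. rewrite ln_exp. reflexivity. Qed.

Lemma Rpower_2_ln16_mul_Rpower p : 0 < p ->
  Rpower 2 (ln 16) * Rpower p (ln (16 * p)) = exp (ln (4 * p) ^ 2).
Proof.
  intro hp. unfold Rpower. rewrite <- exp_plus. f_equal.
  replace 16 with (2 ^ 4) by ring. replace 4 with (2 ^ 2) by ring.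
  rewrite !ln_mult, !ln_pow by (try apply pow_lt; lra). simpl INR. ring.
Qed.

Lemma exists_sq_ge a L y : 0 < a -> 0 <= y -> a * y ^ 2 <= L ->
  exists s, y <= s /\ L = a * s ^ 2.
Proof.
  intros ha hy hL.
  assert (hLa : 0 <= L / a) by (apply Rle_mult_inv_pos; nra).
  exists (sqrt (L / a)). split.
  - rewrite <- (sqrt_pow2 y hy). apply sqrt_le_1_alt.
    apply (Rmult_le_reg_l a); [exact ha|]. field_simplify; lra.
  - rewrite <- Rsqr_pow2, Rsqr_sqrt by exact hLa. field. lra.
Qed.

Section LogBound.

Let c := exp 1 / (exp 1 - 1).

Lemma one_le_c : 1 <= c.
Proof.
  pose proof exp1_gt_2. unfold c.
  apply (Rmult_le_reg_r (exp 1 - 1)); [lra|]. field_simplify; lra.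
Qed.

Lemma two_ln_half_le m s : 2 <= m -> c * m <= s -> m + 2 * ln (s / 2) <= s.
Proof.
  intros hm hs.
  pose proof exp1_gt_2 as he. pose proof one_le_c as hc.
  set (z := m / (2 * (exp 1 - 1))).
  assert (hz : 0 < z) by (unfold z; apply Rdiv_lt_0_compat; lra).
  assert (hcm : c * m / 2 = exp 1 * z) by (unfold c, z; field; lra).
  assert (hcm2 : 2 <= c * m) by nra.
  assert (hslope : ln (s / 2) - ln (c * m / 2) <= (s - c * m) / 2).
  { eapply Rle_trans; [apply ln_sub_ln_le; lra|].
    replace ((s / 2 - c * m / 2) / (c * m / 2)) with ((s - c * m) / (c * m)) by (field; split; lra).
    apply Rmult_le_compat_l; [lra|]. apply Rinv_le_contravar; lra. }
  pose proof (ln_exp1_mul_le z hz) as hez. rewrite <- hcm in hez.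
  assert (hzm : 2 * z = c * m - m) by (unfold c, z; field; lra).
  lra.
Qed.

Lemma ln_mul_sq_bounds a b s : 0 < a -> 0 < b -> 2 <= ln (4 * (a * b)) ->
  c * ln (4 * (a * b)) <= s -> 0 <= ln (b * (a * s ^ 2)) <= s.
Proof.
  intros ha hb hm hs.
  set (m := ln (4 * (a * b))) in *.
  assert (hs2 : 2 <= s) by (pose proof one_le_c; nra).
  assert (hsplit : ln (b * (a * s ^ 2)) = m + 2 * ln (s / 2)).
  { replace (b * (a * s ^ 2)) with (4 * (a * b) * ((s / 2) * (s / 2))) by field.
    rewrite (ln_mult (4 * (a * b))), (ln_mult (s / 2)) by nra.
    unfold m; ring. }
  rewrite hsplit. split.
  - assert (0 <= ln (s / 2)) by (rewrite <- ln_1; apply ln_le; lra). lra.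
  - exact (two_ln_half_le m s hm hs).
Qed.

End LogBound.

Theorem lemma1 (a b x : R) (ha : 0 < a) (hb : 0 < b)
  (hab : a * b >= / 4 * (exp 1) ^ 2) :
  let c := exp 1 / (exp 1 - 1) in
  x >= Rpower (Rpower 2 (ln 16) * Rpower (a * b) (ln (16 * a * b))) (c ^ 2 * a) ->
  ln x >= a * (ln (b * ln x)) ^ 2.
Proof.
  intros c hx.
  assert (hab0 : 0 < a * b) by nra.
  set (m := ln (4 * (a * b))).
  assert (hm : 2 <= m).
  { replace 2 with (ln (exp 1 ^ 2)) by (rewrite ln_pow, ln_exp by apply exp_pos; simpl; ring).
    apply ln_le; [apply pow_lt, exp_pos | lra]. }
  rewrite Rmult_assoc, Rpower_2_ln16_mul_Rpower, Rpower_exp in hx by exact hab0.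
  assert (hL : a * (c * m) ^ 2 <= ln x).
  { replace (a * (c * m) ^ 2) with (ln (exp (c ^ 2 * a * m ^ 2))) by (rewrite ln_exp; ring).
    apply ln_le; [apply exp_pos | exact (Rge_le _ _ hx)]. }
  assert (hcm : 0 <= c * m).
  { pose proof exp1_gt_2. apply Rmult_le_pos; [unfold c; apply Rle_mult_inv_pos|]; lra. }
  destruct (exists_sq_ge a (ln x) (c * m) ha hcm hL) as [s [hs ->]].
  pose proof (ln_mul_sq_bounds a b s ha hb hm hs) as hbounds.
  apply Rle_ge, Rmult_le_compat_l; [lra | apply pow_incr; exact hbounds].
Qed.
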